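(* Let $k$ be an algebraically closed field and $\ell\neq\mathrm{char}(k)$ a prime. Then: (a) An element of $\mathrm{Aut}(\mathbb P^1_k)$ is parabolic if and only if it is uniquely $\ell$-divisible. (b) A subgroup of $\mathrm{Aut}(\mathbb P^1_k)$ is the stabiliser of some point $P\in\mathbb P^1(k)$ if and only if it is the normaliser of the centraliser of some parabolic element.
   Context: An automorphism of $\mathbb P^1_k$ is parabolic if it has exactly one fixed point in $\mathbb P^1(k)$. An element $x$ of a group $G$ is uniquely $\ell$-divisible if there is exactly one $y\in G$ with $y^\ell=x$. *)

(* Aut(P^1_k) = PGL_2(k), represented by invertible 2x2
   matrices modulo nonzero scalars; P^1(k) = nonzero column vectors modulo
   nonzero scalars. *)
From HB Require Import structures.
From mathcomp Require Import all_boot all_order all_algebra all_field.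
Set Implicit Arguments. Unset Strict Implicit. Unset Printing Implicit Defensive.
Import GRing.Theory.
Local Open Scope ring_scope.

Section PGL2.
Variable k : fieldType.

Definition projeq m n (A B : 'M[k]_(m, n)) : Prop :=
  exists c : k, c != 0 /\ A = c *: B.

Definition fixes_pt (A : 'M[k]_2) (v : 'cV[k]_2) : Prop :=
  v != 0 /\ exists c : k, A *m v = c *: v.

Definition parabolic (A : 'M[k]_2) : Prop :=
  exists v, fixes_pt A v /\ forall w, fixes_pt A w -> projeq w v.

Definition uniq_divisible (l : nat) (A : 'M[k]_2) : Prop :=
  (exists y : 'M[k]_2, y \in unitmx /\ projeq (y ^+ l) A) /\
  (forall y y' : 'M[k]_2, y \in unitmx -> y' \in unitmx ->
     projeq (y ^+ l) A -> projeq (y' ^+ l) A -> projeq y y').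

(* subgroups of PGL_2(k): scalar-saturated subgroups of GL_2(k) containing
   the scalars *)
Definition pgl_subgroup (H : 'M[k]_2 -> Prop) : Prop :=
  [/\ forall A, H A -> A \in unitmx,
      forall A B, projeq A B -> H B -> H A,
      H 1,
      forall A B, H A -> H B -> H (A *m B)
    & forall A, H A -> H (invmx A)].

Definition same_subgroup (H K : 'M[k]_2 -> Prop) : Prop :=
  forall A, A \in unitmx -> (H A <-> K A).

Definition stabiliser (v : 'cV[k]_2) : 'M[k]_2 -> Prop :=
  fun A => A \in unitmx /\ exists c : k, A *m v = c *: v.

Definition centraliser (x : 'M[k]_2) : 'M[k]_2 -> Prop :=
  fun A => A \in unitmx /\ projeq (A *m x) (x *m A).

Definition normaliser (C : 'M[k]_2 -> Prop) : 'M[k]_2 -> Prop :=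
  fun A => A \in unitmx /\
    forall B, B \in unitmx -> (C B <-> C (A *m B *m invmx A)).

End PGL2.

(* Conjugation preserves all the notions involved, and every invertible 2x2
   matrix over an algebraically closed field is conjugate either to a shear
   [[p, q], [0, p]] with q != 0 (exactly when it is parabolic) or to a diagonal
   matrix.  An l-th root of a shear commutes with it, so it is a multiple of
   [[1, b], [0, 1]], and b is forced because l is invertible in k.  A diagonal
   matrix diag(a, d) has the non-proportional l-th roots diag(r, s) and
   diag(zeta r, s), with zeta a nontrivial l-th root of unity.  Finally the
   centraliser of a shear consists of the matrices [[a, b], [0, a]], so its
   normaliser is the upper triangular group, the stabiliser of e1. *)

From HB Require Import structures.
From mathcomp Require Import all_boot all_order all_algebra all_field.
From mathcomp Require Import ring.
From Stdlib Require Import Classical.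
Import GRing.Theory.
Local Open Scope ring_scope.

Set Implicit Arguments.
Unset Strict Implicit.

Section Coordinates.
Variable k : fieldType.

Definition mx2 (a b c d : k) : 'M[k]_2 :=
  \matrix_(i, j) if i == ord0 then (if j == ord0 then a else b)
                 else (if j == ord0 then c else d).
Definition col2 (a b : k) : 'cV[k]_2 := \col_i if i == ord0 then a else b.

Lemma ord2_cases (i : 'I_2) : i = ord0 \/ i = ord_max.
Proof. by case: i => [[|[|//]]] ?; [left|right]; apply: val_inj. Qed.

Lemma mx2_coords (A : 'M[k]_2) : exists a b c d, A = mx2 a b c d.
Proof.
exists (A ord0 ord0), (A ord0 ord_max), (A ord_max ord0), (A ord_max ord_max).
by apply/matrixP => i j; rewrite mxE; case: (ord2_cases i) => ->; case: (ord2_cases j) => ->.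
Qed.

Lemma col2_coords (v : 'cV[k]_2) : exists a b, v = col2 a b.
Proof.
exists (v ord0 ord0), (v ord_max ord0).
by apply/matrixP => i j; rewrite mxE (ord1 j); case: (ord2_cases i) => ->.
Qed.

Lemma mx2_inj a b c d a' b' c' d' :
  mx2 a b c d = mx2 a' b' c' d' -> [/\ a = a', b = b', c = c' & d = d'].
Proof.
move=> E; have F i j := congr1 (fun M : 'M_2 => M i j) E.
by move: (F ord0 ord0) (F ord0 ord_max) (F ord_max ord0) (F ord_max ord_max); rewrite !mxE.
Qed.

Lemma col2_inj a b a' b' : col2 a b = col2 a' b' -> a = a' /\ b = b'.
Proof.
move=> E; have F i := congr1 (fun v : 'cV_2 => v i ord0) E.
by move: (F ord0) (F ord_max); rewrite !mxE.
Qed.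

Lemma col2_eq0 a b : (col2 a b == 0) = (a == 0) && (b == 0).
Proof.
apply/eqP/andP => [/(congr1 (fun v : 'cV_2 => (v ord0 ord0, v ord_max ord0)))|].
  by rewrite !mxE => -[-> ->].
by case=> /eqP-> /eqP->; apply/matrixP => i j; rewrite !mxE; case: ifP.
Qed.

Lemma mul_mx2 a b c d a' b' c' d' : mx2 a b c d *m mx2 a' b' c' d' =
  mx2 (a * a' + b * c') (a * b' + b * d') (c * a' + d * c') (c * b' + d * d').
Proof.
apply/matrixP => i j; rewrite !mxE !big_ord_recl big_ord0 addr0 !mxE.
by case: (ord2_cases i) => ->; case: (ord2_cases j) => ->.
Qed.

Lemma mul_mx2_col2 a b c d x y :
  mx2 a b c d *m col2 x y = col2 (a * x + b * y) (c * x + d * y).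
Proof.
apply/matrixP => i j; rewrite !mxE !big_ord_recl big_ord0 addr0 !mxE.
by case: (ord2_cases i) => ->.
Qed.

Lemma scale_mx2 e a b c d : e *: mx2 a b c d = mx2 (e * a) (e * b) (e * c) (e * d).
Proof.
apply/matrixP => i j; rewrite !mxE.
by case: (ord2_cases i) => ->; case: (ord2_cases j) => ->.
Qed.

Lemma scale_col2 e a b : e *: col2 a b = col2 (e * a) (e * b).
Proof. by apply/matrixP => i j; rewrite !mxE; case: (ord2_cases i) => ->. Qed.

Lemma mx2_1 : (1%:M : 'M[k]_2) = mx2 1 0 0 1.
Proof.
apply/matrixP => i j; rewrite !mxE.
by case: (ord2_cases i) => ->; case: (ord2_cases j) => ->.
Qed.

Lemma det_mx2 a b c d : \det (mx2 a b c d) = a * d - b * c.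
Proof.
rewrite (expand_det_row _ ord0) !big_ord_recl big_ord0 addr0 /cofactor !det_mx11.
rewrite !mxE /= expr0 expr1; ring.
Qed.

Lemma unitmx_mx2 a b c d : (mx2 a b c d \in unitmx) = (a * d - b * c != 0).
Proof. by rewrite unitmxE unitfE det_mx2. Qed.

Lemma unitmx_upper_neq0 a b d : mx2 a b 0 d \in unitmx -> a != 0 /\ d != 0.
Proof. by rewrite unitmx_mx2 mulr0 subr0 mulf_eq0 negb_or => /andP. Qed.

End Coordinates.

Section Conjugation.
Variable k : fieldType.

Definition mxconj (Q A : 'M[k]_2) := Q *m A *m invmx Q.

Variable Q : 'M[k]_2.
Hypothesis unitQ : Q \in unitmx.

Lemma mxconjM A B : mxconj Q (A *m B) = mxconj Q A *m mxconj Q B.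
Proof. by rewrite /mxconj !mulmxA mulmxKV. Qed.

Lemma mxconjZ c A : mxconj Q (c *: A) = c *: mxconj Q A.
Proof. by rewrite /mxconj -scalemxAr -scalemxAl. Qed.

Lemma mxconjX A n : mxconj Q (A ^+ n) = mxconj Q A ^+ n.
Proof.
elim: n => [|n IH]; first by rewrite !expr0 /mxconj mulmx1 mulmxV.
by rewrite !exprS -!mulmxE mxconjM IH.
Qed.

Lemma unitmx_conj A : (mxconj Q A \in unitmx) = (A \in unitmx).
Proof. by rewrite /mxconj !unitmx_mul unitmx_inv unitQ andbT. Qed.

Lemma mxconjK : cancel (mxconj Q) (mxconj (invmx Q)).
Proof. by move=> A; rewrite /mxconj invmxK !mulmxA mulVmx // mul1mx mulmxKV. Qed.

Lemma mxconjVK : cancel (mxconj (invmx Q)) (mxconj Q).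
Proof. by move=> A; rewrite /mxconj invmxK !mulmxA mulmxV // mul1mx mulmxK. Qed.

Lemma mxconj_inj : injective (mxconj Q).
Proof. exact: can_inj mxconjK. Qed.

Lemma mxconjV A : A \in unitmx -> mxconj Q (invmx A) = invmx (mxconj Q A).
Proof.
move=> unitA; have unitA' : mxconj Q A \in unitmx by rewrite unitmx_conj.
apply: (can_inj (mulKmx unitA')).
by rewrite -mxconjM !mulmxV // /mxconj mulmx1 mulmxV.
Qed.

Lemma mxconj_mulmx A (w : 'cV[k]_2) : mxconj Q A *m (Q *m w) = Q *m (A *m w).
Proof. by rewrite /mxconj !mulmxA mulmxKV. Qed.

Lemma eigen_mxconj A (w : 'cV[k]_2) c :
  mxconj Q A *m (Q *m w) = c *: (Q *m w) <-> A *m w = c *: w.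
Proof.
rewrite mxconj_mulmx scalemxAr.
by split=> [/(can_inj (mulKmx unitQ))|->].
Qed.

Lemma unit_mulmx_eq0 (w : 'cV[k]_2) : (Q *m w == 0) = (w == 0).
Proof.
by apply/eqP/eqP => [/(congr1 (mulmx (invmx Q)))|->]; rewrite ?mulKmx ?mulmx0.
Qed.

End Conjugation.

Section ConjugationInvariance.
Variable k : fieldType.
Variable Q : 'M[k]_2.
Hypothesis unitQ : Q \in unitmx.

Let unitQV : invmx Q \in unitmx. Proof. by rewrite unitmx_inv. Qed.

Lemma projeq_conj A B : projeq (mxconj Q A) (mxconj Q B) <-> projeq A B.
Proof.
split=> -[c [c0 E]]; exists c; split => //.
  by apply: (mxconj_inj unitQ); rewrite E mxconjZ.
by rewrite E mxconjZ.
Qed.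

Lemma projeq_mulmx (v w : 'cV[k]_2) : projeq (Q *m v) (Q *m w) <-> projeq v w.
Proof.
split=> -[c [c0 E]]; exists c; split => //.
  by apply: (can_inj (mulKmx unitQ)); rewrite E scalemxAr.
by rewrite E scalemxAr.
Qed.

Lemma fixes_pt_conj A w : fixes_pt (mxconj Q A) (Q *m w) <-> fixes_pt A w.
Proof.
rewrite /fixes_pt (unit_mulmx_eq0 unitQ).
by split=> -[w0 [c E]]; split=> //; exists c; apply/(eigen_mxconj unitQ).
Qed.

Lemma parabolic_conj A : parabolic A -> parabolic (mxconj Q A).
Proof.
move=> [v [fix_v uniq_v]]; exists (Q *m v); split; first exact/fixes_pt_conj.
move=> w; rewrite -[w](mulKVmx unitQ) fixes_pt_conj => /uniq_v.
by rewrite -projeq_mulmx.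
Qed.

Lemma uniq_divisible_conj l A : uniq_divisible l A -> uniq_divisible l (mxconj Q A).
Proof.
move=> [[y [unit_y [c [c0 E]]]] uniq_y]; split.
  exists (mxconj Q y); split; first by rewrite unitmx_conj.
  by exists c; split => //; rewrite -mxconjX // E mxconjZ.
move=> y1 y2 unit_y1 unit_y2 E1 E2.
rewrite -(mxconjVK unitQ y1) -(mxconjVK unitQ y2); apply/projeq_conj.
by apply: uniq_y; rewrite ?unitmx_conj //;
  apply/projeq_conj; rewrite mxconjX ?mxconjVK.
Qed.

Lemma centraliser_conj x B : centraliser (mxconj Q x) (mxconj Q B) <-> centraliser x B.
Proof. by rewrite /centraliser unitmx_conj // -!mxconjM //; split=> -[? /projeq_conj]. Qed.

Lemma normaliser_conj x A :
  normaliser (centraliser (mxconj Q x)) (mxconj Q A) <-> normaliser (centraliser x) A.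
Proof.
rewrite /normaliser unitmx_conj //; split=> -[unitA nA]; split=> // B unitB.
  rewrite -(centraliser_conj x B) -(centraliser_conj x (A *m B *m invmx A)).
  by rewrite !mxconjM // mxconjV // nA // unitmx_conj.
rewrite -(mxconjVK unitQ B) centraliser_conj -(mxconjV unitQ unitA) -!mxconjM //.
by rewrite centraliser_conj; apply: nA; rewrite unitmx_conj.
Qed.

Lemma stabiliser_conj w A : stabiliser (Q *m w) (mxconj Q A) <-> stabiliser w A.
Proof.
rewrite /stabiliser unitmx_conj //.
by split=> -[? [c E]]; split=> //; exists c; apply/(eigen_mxconj unitQ).
Qed.

End ConjugationInvariance.

Section Shears.
Variable k : fieldType.
Implicit Types p q a b c d : k.

Lemma parabolic_shear p q : q != 0 -> parabolic (mx2 p q 0 p).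
Proof.
move=> q0; exists (col2 1 0); split.
  split; first by rewrite col2_eq0 oner_eq0.
  by exists p; rewrite mul_mx2_col2 scale_col2; congr col2; ring.
move=> w [w0 [c E]]; have [a [b ew]] := col2_coords w; subst w.
rewrite mul_mx2_col2 scale_col2 in E; case: (col2_inj E) => E1 E2.
have b0 : b = 0.
  apply/eqP/negPn/negP => b0.
  have pc : p = c by apply: (mulIf b0); rewrite -E2; ring.
  have : q * b = c * a - p * a by rewrite -E1; ring.
  by rewrite pc subrr => /eqP; rewrite mulf_eq0 (negbTE q0) (negbTE b0).
subst b; have a0 : a != 0 by move: w0; rewrite col2_eq0 eqxx andbT.
by exists a; split => //; rewrite scale_col2; congr col2; ring.
Qed.

Lemma expr_unipotent b n : mx2 1 b 0 1 ^+ n = mx2 1 (n%:R * b) 0 1.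
Proof.
elim: n => [|n IH]; first by rewrite expr0 mul0r -mx2_1.
by rewrite exprS IH -mulmxE mul_mx2; congr mx2; rewrite ?mulrS; ring.
Qed.

Lemma expr_diag a d n : mx2 a 0 0 d ^+ n = mx2 (a ^+ n) 0 0 (d ^+ n).
Proof.
elim: n => [|n IH]; first by rewrite !expr0 -mx2_1.
by rewrite exprS IH -mulmxE mul_mx2 !exprS; congr mx2; ring.
Qed.

Lemma stabiliser_e1 a b c d :
  stabiliser (col2 1 0) (mx2 a b c d) <-> mx2 a b c d \in unitmx /\ c = 0.
Proof.
rewrite /stabiliser mul_mx2_col2; split=> -[unitA E]; split => //.
  by case: E => e; rewrite scale_col2 => /col2_inj [_]; rewrite !mulr1 !mulr0 addr0.
by exists a; rewrite scale_col2 E; congr col2; ring.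
Qed.

Lemma centraliser_shear p q a b c d : p != 0 -> q != 0 ->
  centraliser (mx2 p q 0 p) (mx2 a b c d) <->
  [/\ mx2 a b c d \in unitmx, c = 0 & a = d].
Proof.
move=> p0 q0; rewrite /centraliser; split; last first.
  move=> [unitA c0 ad]; subst c a; split => //; exists 1; split; first exact: oner_neq0.
  by rewrite scale1r !mul_mx2; congr mx2; ring.
move=> [unitA [g [g0 E]]].
rewrite !mul_mx2 scale_mx2 in E; case: (mx2_inj E) => E1 E2 E3 E4.
rewrite ?(mulr0, mul0r, addr0, add0r) in E1 E2 E3 E4.
have c0 : c = 0.
  apply/eqP/negPn/negP => c0.
  have g1 : g = 1 by apply: (mulIf (mulf_neq0 c0 p0)); rewrite mul1r [RHS]E3; ring.
  have : q * c = a * p - p * a by rewrite E1 g1; ring.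
  by rewrite [a * p]mulrC subrr => /eqP; rewrite mulf_eq0 (negbTE q0) (negbTE c0).
subst c; split => //; rewrite ?(mulr0, mul0r, addr0, add0r) in E1 E2.
have [a0 _] := unitmx_upper_neq0 unitA.
have g1 : g = 1 by apply: (mulIf (mulf_neq0 a0 p0)); rewrite mul1r [RHS]E1; ring.
by apply: (mulIf q0); apply: (addIr (b * p)); rewrite E2 g1; ring.
Qed.

Lemma centraliser_shear_conj_upper p q a b d B : p != 0 -> q != 0 ->
  mx2 a b 0 d \in unitmx -> B \in unitmx ->
  centraliser (mx2 p q 0 p) (mxconj (mx2 a b 0 d) B) <-> centraliser (mx2 p q 0 p) B.
Proof.
move=> p0 q0 unitU unitB; have [a0 d0] := unitmx_upper_neq0 unitU.
have unitM : mxconj (mx2 a b 0 d) B \in unitmx by rewrite unitmx_conj.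
have : mxconj (mx2 a b 0 d) B *m mx2 a b 0 d = mx2 a b 0 d *m B.
  by rewrite /mxconj mulmxKV.
move: unitM; have [m1 [m2 [m3 [m4 ->]]]] := mx2_coords (mxconj (mx2 a b 0 d) B).
have [b1 [b2 [b3 [b4 eB]]]] := mx2_coords B; subst B.
rewrite !mul_mx2 => unitM /mx2_inj [F1 _ F3 F4].
rewrite ?(mulr0, mul0r, addr0, add0r) in F1 F3 F4.
have zero3 : (m3 == 0) = (b3 == 0).
  by move: (congr1 (eq_op^~ 0) F3); rewrite !mulf_eq0 (negbTE a0) (negbTE d0) orbF.
have diag_eq : m3 = 0 -> b3 = 0 -> m1 = b1 /\ m4 = b4.
  move=> m30 b30; subst m3 b3; rewrite ?(mulr0, mul0r, addr0, add0r) in F1 F4.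
  by split; [apply: (mulIf a0); rewrite F1 mulrC | apply: (mulIf d0); rewrite F4 mulrC].
rewrite !centraliser_shear //; split=> -[_ /eqP e3 e14].
  have b30 : b3 = 0 by apply/eqP; rewrite -zero3.
  by split=> //; have [<- <-] := diag_eq (eqP e3) b30.
have m30 : m3 = 0 by apply/eqP; rewrite zero3.
by split=> //; have [-> ->] := diag_eq m30 (eqP e3).
Qed.

Lemma normaliser_centraliser_shear p q A : p != 0 -> q != 0 ->
  normaliser (centraliser (mx2 p q 0 p)) A <-> stabiliser (col2 1 0) A.
Proof.
move=> p0 q0; have [a [b [c [d ->]]]] := mx2_coords A.
have unit_shear : mx2 p q 0 p \in unitmx by rewrite unitmx_mx2 mulr0 subr0 mulf_neq0.
rewrite stabiliser_e1 /normaliser; split=> [[unitA nA] | [unitA c0]]; split=> //; last first.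
  subst c => B unitB; exact: iff_sym (centraliser_shear_conj_upper p0 q0 unitA unitB).
have : centraliser (mx2 p q 0 p) (mxconj (mx2 a b c d) (mx2 p q 0 p)).
  by apply/(nA _ unit_shear); rewrite centraliser_shear.
have : mxconj (mx2 a b c d) (mx2 p q 0 p) *m mx2 a b c d = mx2 a b c d *m mx2 p q 0 p.
  by rewrite /mxconj mulmxKV.
have [m1 [m2 [m3 [m4 ->]]]] := mx2_coords (mxconj (mx2 a b c d) (mx2 p q 0 p)).
rewrite !mul_mx2 centraliser_shear // => /mx2_inj [_ _ F3 F4] [_ m30 m14]; subst m3 m4.
rewrite ?(mulr0, mul0r, addr0, add0r) in F3 F4.
apply/eqP/negPn/negP => c0.
have m1p : m1 = p by apply: (mulIf c0); rewrite F3 mulrC.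
have : c * q = m1 * d - d * p by rewrite F4; ring.
by rewrite m1p [d * p]mulrC subrr => /eqP; rewrite mulf_eq0 (negbTE c0) (negbTE q0).
Qed.

Lemma stabiliser_normaliser_conj_shear (Q A : 'M[k]_2) p q :
  Q \in unitmx -> p != 0 -> q != 0 ->
  stabiliser (Q *m col2 1 0) A <-> normaliser (centraliser (mxconj Q (mx2 p q 0 p))) A.
Proof.
move=> unitQ p0 q0; rewrite -(mxconjVK unitQ A) (stabiliser_conj unitQ).
by rewrite (normaliser_conj unitQ) normaliser_centraliser_shear.
Qed.

End Shears.

Section ShearRoots.
Variable k : fieldType.
Variable l : nat.
Hypothesis lR : (l%:R : k) != 0.

Lemma shear_root (p q : k) y c : p != 0 -> q != 0 -> y \in unitmx ->
  c != 0 -> y ^+ l = c *: mx2 p q 0 p ->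
  exists2 a, a != 0 & y = a *: mx2 1 (q / (l%:R * p)) 0 1.
Proof.
move=> p0 q0 unity c0 E.
(* y commutes with y ^+ l, hence with the shear *)
have : centraliser (mx2 p q 0 p) y.
  split => //; exists 1; split; first exact: oner_neq0.
  apply: (scalerI c0); rewrite scale1r scalemxAr scalemxAl -E !mulmxE.
  exact/commrX/commr_refl.
have [a [b [e [d ey]]]] := mx2_coords y; subst y.
rewrite centraliser_shear // => -[_ e0 da]; subst e d.
have [a0 _] := unitmx_upper_neq0 unity.
have ya : mx2 a b 0 a = a *: mx2 1 (b / a) 0 1 by rewrite scale_mx2; congr mx2; field.
exists a => //; rewrite ya; congr (_ *: mx2 _ _ _ _).
move: E; rewrite ya exprZn expr_unipotent !scale_mx2 => /mx2_inj [E1 E2 _ _].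
have Hq : q = p * (l%:R * (b / a)).
  apply: (mulfI c0); transitivity (c * p * (l%:R * (b / a))); last by ring.
  by rewrite -E1 -E2 mulr1.
by rewrite Hq; field; rewrite lR p0 a0.
Qed.

Lemma uniq_divisible_shear (p q : k) : p != 0 -> q != 0 -> uniq_divisible l (mx2 p q 0 p).
Proof.
move=> p0 q0; split.
  exists (mx2 1 (q / (l%:R * p)) 0 1); split.
    by rewrite unitmx_mx2 mulr0 subr0 mulr1 oner_neq0.
  exists p^-1; split; first by rewrite invr_neq0.
  by rewrite expr_unipotent scale_mx2; congr mx2; field; rewrite ?p0 ?lR.
move=> y y' unity unity' [c [c0 E]] [c' [c0' E']].
have [a a0 ->] := shear_root p0 q0 unity c0 E.
have [a' a0' ->] := shear_root p0 q0 unity' c0' E'.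
exists (a / a'); split; first by rewrite mulf_neq0 ?invr_neq0.
by rewrite scalerA divfK.
Qed.

End ShearRoots.

Section NormalForms.
Variable k : fieldType.
Implicit Types p q s x y z t : k.

Lemma exists_unitmx_e1 (v : 'cV[k]_2) : v != 0 ->
  exists2 Q, Q \in unitmx & Q *m col2 1 0 = v.
Proof.
have [x [y ->]] := col2_coords v; rewrite col2_eq0 negb_and => nz.
have [x0|x0] := eqVneq x 0.
  subst x; exists (mx2 0 1 y 0); last by rewrite mul_mx2_col2; congr col2; ring.
  by rewrite unitmx_mx2 mul0r sub0r mul1r oppr_eq0; rewrite eqxx in nz.
exists (mx2 x 0 y 1); last by rewrite mul_mx2_col2; congr col2; ring.
by rewrite unitmx_mx2 mulr1 mul0r subr0.
Qed.

Lemma unitmx_cols_not_projeq x y z t : col2 x y != 0 -> col2 z t != 0 ->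
  ~ projeq (col2 z t) (col2 x y) -> mx2 x z y t \in unitmx.
Proof.
rewrite !col2_eq0 !negb_and unitmx_mx2 => nv nw np; apply/eqP => det0; apply: np.
have [x0|x0] := eqVneq x 0.
  subst x; rewrite eqxx /= in nv.
  have z0 : z = 0.
    by move/eqP: det0; rewrite mul0r sub0r oppr_eq0 mulf_eq0 (negbTE nv) orbF => /eqP.
  subst z; rewrite eqxx /= in nw.
  exists (t / y); split; first by rewrite mulf_neq0 ?invr_neq0.
  by rewrite scale_col2; congr col2; field.
have tx : t = z * y / x.
  by apply: (mulIf x0); rewrite divfK // mulrC; apply/eqP; rewrite -subr_eq0 det0.
have z0 : z != 0 by apply: contraTneq nw => z0; rewrite tx z0 !mul0r eqxx.
exists (z / x); split; first by rewrite mulf_neq0 ?invr_neq0.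
by rewrite scale_col2 tx; congr col2; field.
Qed.

Lemma fixes_pt_upper p q s : col2 q (s - p) != 0 -> fixes_pt (mx2 p q 0 s) (col2 q (s - p)).
Proof.
by move=> nz; split=> //; exists s; rewrite mul_mx2_col2 scale_col2; congr col2; ring.
Qed.

Lemma parabolic_conj_shear (A : 'M[k]_2) : A \in unitmx -> parabolic A ->
  exists Q p q, [/\ Q \in unitmx, p != 0, q != 0 & A = mxconj Q (mx2 p q 0 p)].
Proof.
move=> unitA [v [fix_v uniq_v]].
have [Q unitQ eQ] := exists_unitmx_e1 fix_v.1.
have unitQV : invmx Q \in unitmx by rewrite unitmx_inv.
pose A' := mxconj (invmx Q) A.
have eA : A = mxconj Q A' by rewrite /A' mxconjVK.
have uniq_e1 w : fixes_pt A' w -> projeq w (col2 1 0).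
  rewrite -(projeq_mulmx unitQ) eQ -(fixes_pt_conj unitQ) -eA; exact: uniq_v.
have : fixes_pt A' (col2 1 0) by rewrite -(fixes_pt_conj unitQ) -eA eQ.
have : A' \in unitmx by rewrite unitmx_conj.
move: eA uniq_e1; have [p [q [r [s ->]]]] := mx2_coords A'.
move=> eA uniq_e1 unitA' [_ [c]]; rewrite mul_mx2_col2 scale_col2 => /col2_inj [_].
rewrite mulr1 !mulr0 addr0 => r0; subst r.
have [p0 _] := unitmx_upper_neq0 unitA'.
have sp : s = p.
  have [/eqP|nz] := eqVneq (col2 q (s - p)) 0.
    by rewrite col2_eq0 subr_eq0 => /andP [_ /eqP].
  have [e [_]] := uniq_e1 _ (fixes_pt_upper nz).
  by rewrite scale_col2 mulr0 => /col2_inj [_ /eqP]; rewrite subr_eq0 => /eqP.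
subst s; exists Q, p, q; split => //; apply/eqP => q0; subst q.
have : fixes_pt (mx2 p 0 0 p) (col2 0 1).
  split; first by rewrite col2_eq0 oner_eq0 andbF.
  by exists p; rewrite mul_mx2_col2 scale_col2; congr col2; ring.
move=> /uniq_e1 [e [_]].
by rewrite scale_col2 mulr0 => /col2_inj [_ /eqP]; rewrite oner_eq0.
Qed.

Lemma fixes_pt2_conj_diag (A : 'M[k]_2) v w : A \in unitmx ->
  fixes_pt A v -> fixes_pt A w -> ~ projeq w v ->
  exists Q a d, [/\ Q \in unitmx, a != 0, d != 0 & A = mxconj Q (mx2 a 0 0 d)].
Proof.
have [x [y ->]] := col2_coords v; have [z [t ->]] := col2_coords w.
move=> unitA [v0 [a Ea]] [w0 [d Ed]] nproj.
have unitQ := unitmx_cols_not_projeq v0 w0 nproj.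
have EQ : A *m mx2 x z y t = mx2 x z y t *m mx2 a 0 0 d.
  have [a1 [a2 [a3 [a4 eA]]]] := mx2_coords A; subst A.
  move: Ea Ed; rewrite !mul_mx2_col2 !scale_col2 !mul_mx2.
  by move=> /col2_inj [-> ->] /col2_inj [-> ->]; congr mx2; ring.
have eA : A = mxconj (mx2 x z y t) (mx2 a 0 0 d) by rewrite /mxconj -EQ mulmxK.
have : mx2 a 0 0 d \in unitmx by rewrite -(unitmx_conj unitQ) -eA.
by move=> /unitmx_upper_neq0 [a0 d0]; exists (mx2 x z y t), a, d.
Qed.

End NormalForms.

Section ClosedField.
Variable k : closedFieldType.

Lemma closed_nth_root n (a : k) : (0 < n)%N -> exists x, x ^+ n = a.
Proof.
move=> n_gt0.
have [x Hx] := @solve_monicpoly k n (fun i => if i == 0%N then a else 0) n_gt0.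
exists x; rewrite {}Hx; case: n n_gt0 => // n _.
by rewrite big_ord_recl /= expr0 mulr1 big1 ?addr0 // => i _; rewrite mul0r.
Qed.

Lemma closed_root_of_unity_neq1 l : (1 < l)%N -> (l%:R : k) != 0 ->
  exists2 z : k, z ^+ l = 1 & z != 1.
Proof.
case: l => // n n_gt0 lR.
have [x Hx] := @solve_monicpoly k n (fun => -1) n_gt0.
have geom0 : \sum_(i < n.+1) x ^+ i = 0.
  by rewrite big_ord_recr /= Hx -big_split /= big1 // => i _; ring.
exists x; first by apply/eqP; rewrite -subr_eq0 subrX1 geom0 mulr0.
apply: contra_neq lR => x1; move: geom0; rewrite x1.
by under eq_bigr do rewrite expr1n; rewrite sumr_const card_ord.
Qed.

Lemma exists_fixes_pt (A : 'M[k]_2) : exists v, fixes_pt A v.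
Proof.
have [a [b [c [d ->]]]] := mx2_coords A.
have [x Hx] := @solve_monicpoly k 2 (fun i => if i == 0%N then b * c - a * d else a + d) isT.
rewrite !big_ord_recl big_ord0 /= expr0 expr1 mulr1 addr0 in Hx.
have [b0|b0] := eqVneq b 0.
  exists (col2 0 1); split; first by rewrite col2_eq0 oner_eq0 andbF.
  by exists d; rewrite mul_mx2_col2 scale_col2 b0; congr col2; ring.
exists (col2 b (x - a)); split; first by rewrite col2_eq0 (negbTE b0).
exists x; rewrite mul_mx2_col2 scale_col2; congr col2; first ring.
rewrite (_ : x * (x - a) = x ^+ 2 - a * x); last by ring.
by rewrite Hx; ring.
Qed.

Lemma not_parabolic_conj_diag (A : 'M[k]_2) : A \in unitmx -> ~ parabolic A ->
  exists Q a d, [/\ Q \in unitmx, a != 0, d != 0 & A = mxconj Q (mx2 a 0 0 d)].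
Proof.
move=> unitA not_par; have [v fix_v] := exists_fixes_pt A.
have [w [fix_w nproj]] : exists w, fixes_pt A w /\ ~ projeq w v.
  apply: NNPP => all_proj; apply: not_par; exists v; split => // w fix_w.
  by apply: NNPP => nproj; apply: all_proj; exists w.
exact: fixes_pt2_conj_diag unitA fix_v fix_w nproj.
Qed.

Lemma not_uniq_divisible_diag l (a d : k) : (1 < l)%N -> (l%:R : k) != 0 ->
  a != 0 -> d != 0 -> ~ uniq_divisible l (mx2 a 0 0 d).
Proof.
move=> l_gt1 lR a0 d0 [_ uniq_root].
have l_gt0 : (0 < l)%N by exact: ltnW.
have [r Er] := closed_nth_root a l_gt0.
have [s Es] := closed_nth_root d l_gt0.
have [z Ez z1] := closed_root_of_unity_neq1 l_gt1 lR.
have r0 : r != 0 by apply: contraNneq a0 => r0; rewrite -Er r0 expr0n gtn_eqF.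
have s0 : s != 0 by apply: contraNneq d0 => s0; rewrite -Es s0 expr0n gtn_eqF.
have z0 : z != 0 by apply: contra_neq (oner_neq0 k) => z0; rewrite -Ez z0 expr0n gtn_eqF.
have [c [c0 E]] : projeq (mx2 r 0 0 s) (mx2 (r * z) 0 0 s).
  apply: uniq_root.
  - by rewrite unitmx_mx2 mulr0 subr0 mulf_neq0.
  - by rewrite unitmx_mx2 mulr0 subr0 !mulf_neq0.
  - by exists 1; rewrite oner_neq0 scale1r expr_diag Er Es.
  - by exists 1; rewrite oner_neq0 scale1r expr_diag exprMn Er Ez mulr1 Es.
rewrite scale_mx2 in E; case: (mx2_inj E) => E1 _ _ E4.
have c1 : c = 1 by apply: (mulIf s0); rewrite -E4 mul1r.
by move/eqP: z1; apply; apply: (mulfI r0); rewrite mulr1 [RHS]E1 c1 mul1r.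
Qed.

End ClosedField.

Unset Implicit Arguments.

Theorem mainTheorem14 (k : closedFieldType) (l : nat)
  (hl : prime l) (hchar : l \notin [pchar k]) :
  (forall A : 'M[k]_2, A \in unitmx ->
     (parabolic A <-> uniq_divisible l A)) /\
  (forall H : 'M[k]_2 -> Prop, pgl_subgroup H ->
     ((exists v : 'cV[k]_2, v != 0 /\ same_subgroup H (stabiliser v)) <->
      (exists x : 'M[k]_2, x \in unitmx /\ parabolic x /\
         same_subgroup H (normaliser (centraliser x))))).
Proof.
(* Part (b) holds for any predicate H: both sides are compared on invertible matrices only. *)
have l_gt1 : (1 < l)%N := prime_gt1 hl.
have lR : (l%:R : k) != 0 by move: hchar; rewrite inE /= hl.
split=> [A unitA | H _]; split.
- move=> /(parabolic_conj_shear unitA) [Q [p [q [unitQ p0 q0 ->]]]].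
  exact/(uniq_divisible_conj unitQ)/uniq_divisible_shear.
- move=> uniq_div; apply: NNPP => /(not_parabolic_conj_diag unitA).
  move=> [Q [a [d [unitQ a0 d0 eA]]]].
  have unitQV : invmx Q \in unitmx by rewrite unitmx_inv.
  apply: (not_uniq_divisible_diag l_gt1 lR a0 d0).
  by rewrite -(mxconjK unitQ (mx2 a 0 0 d)) -eA; apply: uniq_divisible_conj.
- move=> [v [v0 Hv]]; have [Q unitQ eQ] := exists_unitmx_e1 v0.
  exists (mxconj Q (mx2 1 1 0 1)); split.
    by rewrite unitmx_conj // unitmx_mx2 mulr0 subr0 mulr1 oner_neq0.
  split; first exact/(parabolic_conj unitQ)/parabolic_shear/oner_neq0.
  move=> A unitA; apply: iff_trans (Hv A unitA) _; rewrite -eQ.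
  by apply: stabiliser_normaliser_conj_shear; rewrite ?oner_neq0.
- move=> [x [unitx [par_x Hx]]].
  have [Q [p [q [unitQ p0 q0 ex]]]] := parabolic_conj_shear unitx par_x.
  exists (Q *m col2 1 0); split; first by rewrite unit_mulmx_eq0 // col2_eq0 oner_eq0.
  move=> A unitA; apply: iff_trans (Hx A unitA) _; rewrite ex.
  by apply: iff_sym; apply: stabiliser_normaliser_conj_shear.
Qed.
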